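(* Let $(X,\|\cdot\|)$ be a Banach space, $B_X=\{x\in X:\|x\|\le1\}$, and let $B\subset X\setminus B_X$ be nonempty with $\mathrm{dist}(B,B_X)\ge1$. Suppose the ordered pair $(B_X,B)$ has the $UC$ property and there exists $p\in B$ with $\mathrm{dist}(p,B_X)=\mathrm{dist}(B,B_X)$. If $\{x_n\}_{n=1}^\infty,\{z_n\}_{n=1}^\infty\subset B_X$ and real numbers $\lambda_n$ satisfy $\lim_{n\to\infty}\left\|\frac{x_n+z_n}{2}\right\|=1$ and $x_n+z_n=|\lambda_n|\,p$ for all $n$, then $\lim_{n\to\infty}\|x_n-z_n\|=0$.
   Context: $\mathrm{dist}(A,B)=\inf\{\|a-b\|:a\in A,b\in B\}$ and $\mathrm{dist}(p,A)=\mathrm{dist}(\{p\},A)$. The ordered pair $(A,B)$ has the $UC$ property if for all sequences $\{x_n\},\{z_n\}\subset A$, $\{y_n\}\subset B$ with $\lim_n\|x_n-y_n\|=\lim_n\|z_n-y_n\|=\mathrm{dist}(A,B)$ one has $\lim_n\|x_n-z_n\|=0$. *)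

From HB Require Import structures.
From mathcomp Require Import all_boot all_order all_algebra.
From mathcomp Require Import all_classical all_reals all_analysis.
Set Implicit Arguments. Unset Strict Implicit. Unset Printing Implicit Defensive.
Import Order.TTheory GRing.Theory Num.Theory.
Import numFieldNormedType.Exports.
Local Open Scope classical_set_scope.
Local Open Scope ring_scope.

Definition setdist {R : realType} {X : normedModType R} (A B : set X) : R :=
  inf [set `|a - b| | a in A & b in B].

Definition ptdist {R : realType} {X : normedModType R} (p : X) (A : set X) : R :=
  setdist [set p] A.

Definition unit_ball {R : realType} (X : normedModType R) : set X :=
  [set x : X | `|x| <= 1].

Definition UC_prop {R : realType} {X : normedModType R} (A B : set X) : Prop :=
  forall (x z y : nat -> X),
    (forall n, A (x n)) -> (forall n, A (z n)) -> (forall n, B (y n)) ->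
    (fun n => `|x n - y n|) @ \oo --> setdist A B ->
    (fun n => `|z n - y n|) @ \oo --> setdist A B ->
    (fun n => `|x n - z n|) @ \oo --> (0 : R).

From HB Require Import structures.
From mathcomp Require Import all_boot all_order all_algebra.
From mathcomp Require Import all_classical all_reals all_analysis.
From mathcomp Require Import lra.
Import Order.TTheory GRing.Theory Num.Theory.
Import numFieldNormedType.Exports.
Local Open Scope classical_set_scope.
Local Open Scope ring_scope.

(* Write d := dist(B, B_X).  The UC property, applied to the
   sequences x_n, z_n in B_X and the constant sequence p in B, yields
   ||x_n - z_n|| -> 0 as soon as ||x_n - p|| -> d and ||z_n - p|| -> d.
   The lower bound d <= ||x_n - p|| holds because p is in B.  For the upper
   bound, write s_n := ||x_n + z_n|| = m_n ||p|| with m_n = |lam_n|; since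
   m_n (x_n - p) = (m_n - 1) x_n - z_n we get the pointwise estimate
       s_n ||x_n - p|| <= |s_n - ||p||| + ||p||        (collinear_sum_bound).
   As s_n -> 2, the right-hand side divided by s_n tends to
   (|2 - ||p||| + ||p||) / 2, which is at most d because d >= 1 and
   d = dist(p, B_X) >= ||p|| - 1.  A squeeze gives ||x_n - p|| -> d
   (cvg_dist_to_center); by symmetry the same holds for z_n. *)

Lemma setdist_le (R : realType) (X : normedModType R) (A B : set X) a b :
  A a -> B b -> setdist A B <= `|a - b|.
Proof.
move=> Aa Bb; apply: ge_inf; last by exists a => //; exists b.
by exists 0 => _ [a' _ [b' _ <-]].
Qed.

Lemma setdistC (R : realType) (X : normedModType R) (A B : set X) :
  setdist A B = setdist B A.
Proof.
rewrite /setdist; congr inf; apply/seteqP; split=> _ [a Aa [b Bb <-]];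
  by exists b => //; exists a => //; rewrite distrC.
Qed.

Lemma ptdist_unit_ball_ge (R : realType) (X : normedModType R) (p : X) :
  `|p| - 1 <= ptdist p (@unit_ball R X).
Proof.
apply: lb_le_inf.
  by exists `|p - 0|; exists p => //; exists 0 => //; rewrite /unit_ball /= normr0.
move=> _ [_ -> [b Ub <-]].
by apply: le_trans (lerB_dist _ _); apply: lerB.
Qed.

Lemma collinear_sum_bound {R : realType} {X : normedModType R} {x z p : X}
  {m : R} :
  `|x| <= 1 -> `|z| <= 1 -> 0 <= m -> x + z = m *: p ->
  `|x + z| * `|x - p| <= `| `|x + z| - `|p| | + `|p|.
Proof.
move=> x1 z1 m0 xz.
have scaled_dist : m * `|x - p| = `|(m - 1) *: x - z|.
  rewrite -[m in LHS]ger0_norm // -normrZ; congr `|_|.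
  by rewrite scalerBr -xz scalerBl scale1r opprD addrA.
have scaled_bound : m * `|x - p| <= `|m - 1| + 1.
  rewrite scaled_dist; apply: (le_trans (ler_normB _ _)).
  rewrite normrZ lerD // -[leRHS]mulr1 ler_wpM2l //.
have norm_sum : `|x + z| = m * `|p| by rewrite xz normrZ ger0_norm.
have gap : `| `|x + z| - `|p| | = `|m - 1| * `|p|.
  by rewrite norm_sum -{2}[`|p|]mul1r -mulrBl normrM normr_id.
rewrite gap norm_sum mulrAC.
have := ler_wpM2r (normr_ge0 p) scaled_bound.
by rewrite mulrDl mul1r.
Qed.

Lemma center_slack (R : realDomainType) (a d : R) :
  1 <= d -> a - 1 <= d -> `|2 - a| + a <= 2 * d.
Proof.
by move=> d1 ad; rewrite -lerBrDr ler_norml; apply/andP; split; lra.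
Qed.

Lemma cvg_dist_to_center {R : realType} {X : normedModType R}
  {x z : nat -> X} {p : X} {lam : nat -> R} {d : R} :
  (forall n, `|x n| <= 1) -> (forall n, `|z n| <= 1) ->
  (forall n, x n + z n = `|lam n| *: p) ->
  (fun n => `|x n + z n|) @ \oo --> (2 : R) ->
  (forall n, d <= `|x n - p|) ->
  `|2 - `|p| | + `|p| <= 2 * d ->
  (fun n => `|x n - p|) @ \oo --> d.
Proof.
move=> x1 z1 xz sum2 d_le slack.
pose s n := `|x n + z n|.
pose bound n := (`|s n - `|p| | + `|p|) / s n.
pose c := d - (`|2 - `|p| | + `|p|) / 2.
have bound_lim : bound @ \oo --> (`|2 - `|p| | + `|p|) / 2.
  apply: cvgM; last exact: (cvgV _ sum2).
  apply: cvgD; last exact: cvg_cst.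
  by apply: cvg_norm; apply: cvgB => //; exact: cvg_cst.
have c0 : 0 <= c by rewrite /c subr_ge0 ler_pdivrMr // mulrC.
apply: (@squeeze_cvgr _ _ _ _ (fun=> d) (fun n => bound n + c)).
- have s_pos : \forall n \near \oo, 0 < s n by apply: (cvgr_gt _ sum2).
  near=> n; rewrite d_le /=; apply: ler_wpDr => //.
  rewrite /bound ler_pdivlMr; last by near: n.
  by rewrite mulrC; exact: collinear_sum_bound (x1 n) (z1 n) (normr_ge0 _) (xz n).
- exact: cvg_cst.
- have -> : d = (`|2 - `|p| | + `|p|) / 2 + c by rewrite /c addrC subrK.
  by apply: cvgD; [exact: bound_lim | exact: cvg_cst].
Unshelve. all: by end_near.
Qed.

Lemma cvg_norm_sum_of_midpoint {R : realType} {X : normedModType R}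
  {x z : nat -> X} :
  (fun n => `|2^-1 *: (x n + z n)|) @ \oo --> (1 : R) ->
  (fun n => `|x n + z n|) @ \oo --> (2 : R).
Proof.
move=> mid1.
have double n : `|x n + z n| = 2 * `|2^-1 *: (x n + z n)|.
  by rewrite normrZ mulrA ger0_norm ?invr_ge0 ?ler0n // mulfV ?mul1r.
rewrite (funext double) -[X in _ --> X]mulr1.
by apply: cvgM => //; exact: cvg_cst.
Qed.

Theorem lemma46 (R : realType) (X : completeNormedModType R) (B : set X)
  (p : X) (x z : nat -> X) (lam : nat -> R) :
  B `<=` ~` (@unit_ball R X) ->
  B !=set0 ->
  1 <= setdist B ((@unit_ball R X)) ->
  UC_prop ((@unit_ball R X)) B ->
  B p ->
  ptdist p ((@unit_ball R X)) = setdist B ((@unit_ball R X)) ->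
  (forall n, (@unit_ball R X) (x n)) ->
  (forall n, (@unit_ball R X) (z n)) ->
  (fun n => `|2^-1 *: (x n + z n)|) @ \oo --> (1 : R) ->
  (forall n, x n + z n = `|lam n| *: p) ->
  (fun n => `|x n - z n|) @ \oo --> (0 : R).
Proof.
move=> _ _ d_ge1 uc Bp p_attains ux uz mid1 sum_p.
set U := @unit_ball R X in ux uz uc p_attains d_ge1 *.
set d := setdist B U in p_attains d_ge1 *.
have d_le w : U w -> d <= `|w - p|.
  by move=> Uw; rewrite distrC; exact: setdist_le.
have slack : `|2 - `|p| | + `|p| <= 2 * d.
  by apply: center_slack => //; rewrite -p_attains; exact: ptdist_unit_ball_ge.
have sum2 := cvg_norm_sum_of_midpoint mid1.
have x_to_p : (fun n => `|x n - p|) @ \oo --> setdist U B.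
  rewrite setdistC; apply: (cvg_dist_to_center ux uz sum_p sum2) => // n.
  exact: d_le.
have z_to_p : (fun n => `|z n - p|) @ \oo --> setdist U B.
  rewrite setdistC; apply: (cvg_dist_to_center uz ux _ _ _ slack).
  - by move=> n; rewrite addrC.
  - by under eq_fun do rewrite addrC.
  - by move=> n; exact: d_le.
exact: uc x z (fun=> p) ux uz (fun=> Bp) x_to_p z_to_p.
Qed.
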